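(* Let $X,Y,Z_1,\dots,Z_{k+1}$ ($k\ge1$) be random variables with finite state spaces. Then $\widetilde{UI}(X:Y\setminus(Z_1,\dots,Z_k))\ge\widetilde{UI}(X:Y\setminus(Z_1,\dots,Z_{k+1}))$.
   Context: For random variables $X,Y,Z$ with finite state spaces $\mathcal X,\mathcal Y,\mathcal Z$ and joint distribution $P$, let $\Delta$ be the set of all distributions on $\mathcal X\times\mathcal Y\times\mathcal Z$, $\Delta_P=\{Q\in\Delta: Q(X=x,Y=y)=P(X=x,Y=y)\text{ and }Q(X=x,Z=z)=P(X=x,Z=z)\ \forall x,y,z\}$, and $\widetilde{UI}(X:Y\setminus Z)=\min_{Q\in\Delta_P}MI_Q(X:Y|Z)$, where $MI_Q$ is conditional mutual information computed w.r.t. $Q$. Here $\widetilde{UI}(X:Y\setminus(Z_1,\dots,Z_m))$ means this definition applied with $Z$ the tuple $(Z_1,\dots,Z_m)$ (state space the product of the state spaces of the $Z_i$) and $P$ the joint distribution of $(X,Y,Z_1,\dots,Z_m)$; so $\Delta_P$ consists of distributions of $(X,Y,Z_1,\dots,Z_m)$ with the same $(X,Y)$-marginal and the same $(X,Z_1,\dots,Z_m)$-marginal as $P$. *)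

From HB Require Import structures.
From mathcomp Require Import all_boot.
From Stdlib Require Import Reals ClassicalEpsilon.

Set Implicit Arguments.
Unset Strict Implicit.
Unset Printing Implicit Defensive.

Local Open Scope R_scope.

Lemma Rplus_assoc' : associative Rplus.
Proof. by move=> a b c; rewrite Rplus_assoc. Qed.
HB.instance Definition _ :=
  Monoid.isComLaw.Build R 0%R Rplus Rplus_assoc' Rplus_comm Rplus_0_l.

Definition rsum (T : finType) (f : T -> R) : R := \big[Rplus/0%R]_(t : T) f t.

Definition is_dist (T : finType) (p : T -> R) : Prop :=
  (forall t, 0 <= p t) /\ rsum p = 1.

Section CMI.
Variables (TX TY TZ : finType).

Definition margXY (Q : TX * TY * TZ -> R) (x : TX) (y : TY) : R :=
  rsum (fun z : TZ => Q (x, y, z)).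
Definition margXZ (Q : TX * TY * TZ -> R) (x : TX) (z : TZ) : R :=
  rsum (fun y : TY => Q (x, y, z)).
Definition margYZ (Q : TX * TY * TZ -> R) (y : TY) (z : TZ) : R :=
  rsum (fun x : TX => Q (x, y, z)).
Definition margZ (Q : TX * TY * TZ -> R) (z : TZ) : R :=
  rsum (fun xy : TX * TY => Q (xy.1, xy.2, z)).

Definition CMI (Q : TX * TY * TZ -> R) : R :=
  rsum (fun t : TX * TY * TZ =>
    let: (x, y, z) := t in
    if Req_EM_T (Q (x, y, z)) 0 then 0
    else Q (x, y, z) *
         ln (Q (x, y, z) * margZ Q z / (margXZ Q x z * margYZ Q y z))).

Definition DeltaP (P Q : TX * TY * TZ -> R) : Prop :=
  is_dist Q /\
  (forall x y, margXY Q x y = margXY P x y) /\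
  (forall x z, margXZ Q x z = margXZ P x z).

Definition is_min_UI (P : TX * TY * TZ -> R) (r : R) : Prop :=
  (exists Q, DeltaP P Q /\ CMI Q = r) /\
  (forall Q, DeltaP P Q -> r <= CMI Q).

Definition UI (P : TX * TY * TZ -> R) : R :=
  epsilon (inhabits 0%R) (is_min_UI P).
End CMI.

(* The state space of the tuple (Z_1,...,Z_n), where Z_{i+1} has state space TZ i. *)
Definition Ztuple (TZ : nat -> finType) (n : nat) : finType :=
  {dffun forall i : 'I_n, TZ (nat_of_ord i)}.

Definition Zinit (TZ : nat -> finType) (k : nat) (z : Ztuple TZ k.+1) : Ztuple TZ k :=
  @finfun _ (fun i : 'I_k => TZ (nat_of_ord i)) (fun i => z (widen_ord (leqnSn k) i)).

Definition marg_init (TX TY : finType) (TZ : nat -> finType) (k : nat)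
  (P : TX * TY * Ztuple TZ k.+1 -> R) : TX * TY * Ztuple TZ k -> R :=
  fun t => rsum (fun z : Ztuple TZ k.+1 =>
                   if Zinit z == t.2 then P (t.1.1, t.1.2, z) else 0).

(* More generally, for any map pi : Z -> W, UI~(X : Y \ pi Z) >= UI~(X : Y \ Z);
   forgetting Z_{k+1} is the map Zinit.  Let P be the law of (X, Y, Z) and
   coarsen P that of (X, Y, pi Z).  Given Q in Delta for coarsen P, its lift
     Q'(x, y, z) = Q(x, y, pi z) * P(x, z) / P(x, pi z)
   lies in Delta_P, and a log-sum argument (ln c <= c - 1 on the correction
   factor Q(y, pi z) Q'(z) / (Q(pi z) Q'(y, z))) gives MI_Q'(X:Y|Z) <= MI_Q(X:Y|W).
   Applied to a minimiser Q of the coarse problem this yields the theorem.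

   Since UI is defined by choice, we also prove that the minimum exists: Delta_P is
   a compact subset of the finite-dimensional cube and MI is continuous there,
   being a signed sum of terms x ln x of the law and its marginals. *)
From HB Require Import structures.
From mathcomp Require Import all_boot all_order all_algebra.
From mathcomp Require Import all_classical all_reals all_analysis.
From mathcomp Require Import Rstruct Rstruct_topology.
From Stdlib Require Import Reals Lra ClassicalEpsilon.

Set Implicit Arguments.
Unset Strict Implicit.
Unset Printing Implicit Defensive.

Local Open Scope R_scope.

(* Stdlib's logarithm is 0 on non-positive arguments. *)
Lemma ln_nonpos x : x <= 0 -> ln x = 0.
Proof. by move=> Hx; unfold ln; case: Rlt_dec => [Hpos|//]; exfalso; lra. Qed.

Lemma ln_le_sub1 x : 0 < x -> ln x <= x - 1.
Proof.
move=> Hx; have [//|Hlt] := Rle_or_lt (ln x) (x - 1).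
have := exp_increasing _ _ Hlt; rewrite exp_ln //.
have := exp_ineq1_le (x - 1); lra.
Qed.

(* With Stdlib's convention / 0 = 0, no positivity of b is needed. *)
Lemma Rdiv_nonneg a b : 0 <= a -> 0 <= b -> 0 <= a / b.
Proof.
move=> Ha Hb; case: (Req_EM_T b 0) => [->|Hb0]; first by rewrite /Rdiv Rinv_0; lra.
by apply: Rmult_le_pos => //; apply/Rlt_le/Rinv_0_lt_compat; lra.
Qed.

(* a * (b / a) is b, or 0 when a = 0. *)
Lemma Rmult_div_le a b : 0 <= a -> 0 <= b -> a * (b / a) <= b.
Proof.
move=> Ha Hb; case: (Req_EM_T a 0) => [->|Ha0]; first by lra.
have -> : a * (b / a) = b by field.
lra.
Qed.

(* The entropy kernel; with ln 0 = 0 it is 0 at 0. *)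
Definition xlnx (q : R) : R := q * ln q.

(* -y ln y = 2 y (-ln sqrt y) <= 2 y (1/sqrt y - 1) <= 2 sqrt y. *)
Lemma xlnx_lower_bound y : 0 < y -> - (y * ln y) <= 2 * sqrt y.
Proof.
move=> Hy.
have Hs : 0 < sqrt y by apply: sqrt_lt_R0.
have Hss : sqrt y * sqrt y = y by apply: sqrt_sqrt; lra.
have Hl : ln y = 2 * ln (sqrt y) by rewrite -{1}Hss ln_mult //; ring.
have Hb : - ln (sqrt y) <= / sqrt y - 1.
  by rewrite -ln_Rinv //; apply/ln_le_sub1/Rinv_0_lt_compat.
have Hinv : sqrt y * / sqrt y = 1 by apply: Rinv_r; lra.
have := Rmult_le_compat_l (2 * y) _ _ (ltac:(lra)) Hb.
rewrite Hl -{1 3}Hss; nra.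
Qed.

(* The only delicate point: |y ln y| <= 2 sqrt y for small y > 0. *)
Lemma xlnx_continuous_at_0 : continuity_pt xlnx 0.
Proof.
move=> eps Heps; exists (Rmin 1 ((eps / 2) ^ 2)); split.
  by apply: Rmin_pos; [lra | apply: pow_lt; lra].
move=> y [_ Hy]; rewrite /= /Rdist /xlnx Rmult_0_l !Rminus_0_r in Hy *.
have [Hy0|Hy0] := Rle_or_lt y 0.
  by rewrite ln_nonpos // Rmult_0_r Rabs_R0.
rewrite Rabs_right in Hy; last lra.
have Hy1 := Rlt_le_trans _ _ _ Hy (Rmin_l _ _).
have Hy2 := Rlt_le_trans _ _ _ Hy (Rmin_r _ _).
have Hneg : ln y < 0 by rewrite -ln_1; apply: ln_increasing.
have Hsqrt : sqrt y < eps / 2.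
  by rewrite -(sqrt_pow2 (eps / 2)); [apply: sqrt_lt_1 => //; lra | lra].
rewrite Rabs_left; last nra.
have := xlnx_lower_bound Hy0; lra.
Qed.

(* x ln x is continuous on R: differentiable on (0,oo), locally 0 on (-oo,0). *)
Lemma xlnx_continuity_pt x : continuity_pt xlnx x.
Proof.
have [Hx|[<-|Hx]] := Rtotal_order 0 x.
- have D : derivable_pt_lim (fun q => q * ln q) x (1 * ln x + x * / x).
    exact: (derivable_pt_lim_mult id ln x 1 (/ x) (derivable_pt_lim_id x)
              (derivable_pt_lim_ln x Hx)).
  exact: (derivable_continuous_pt _ x (exist _ _ D)).
- exact: xlnx_continuous_at_0.
- move=> eps Heps; exists (- x); split; first lra.
  move=> y [_ Hy]; rewrite /= /Rdist /xlnx in Hy *.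
  have /Rabs_def2 [Hyx _] := Hy.
  rewrite (@ln_nonpos x) ?(@ln_nonpos y); try lra.
  by rewrite !Rmult_0_r Rminus_0_r Rabs_R0.
Qed.

Lemma xlnx_continuous : continuous xlnx.
Proof. by move=> x; apply/continuity_pt_cvg; exact: xlnx_continuity_pt. Qed.

Section FiniteSums.
Variable T : finType.
Implicit Types f g : T -> R.

Lemma rsum_ext f g : (forall t, f t = g t) -> rsum f = rsum g.
Proof. by move=> H; apply: eq_bigr => t _; apply: H. Qed.

Lemma rsum_add f g : rsum (fun t => f t + g t) = rsum f + rsum g.
Proof. by rewrite /rsum big_split. Qed.

Lemma rsum_const0 : rsum (fun _ : T => 0) = 0.
Proof. by rewrite /rsum big1. Qed.

Lemma rsum_scal c f : c * rsum f = rsum (fun t => c * f t).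
Proof.
rewrite /rsum; elim/big_rec2: _ => [|i y1 y2 _ <-]; first by rewrite Rmult_0_r.
by rewrite Rmult_plus_distr_l.
Qed.

Lemma rsum_scalr c f : rsum f * c = rsum (fun t => f t * c).
Proof. rewrite Rmult_comm rsum_scal; apply: rsum_ext => t; apply: Rmult_comm. Qed.

Lemma rsum_opp f : rsum (fun t => - f t) = - rsum f.
Proof.
rewrite /rsum; elim/big_rec2: _ => [|i y1 y2 _ ->]; first by rewrite Ropp_0.
by rewrite Ropp_plus_distr.
Qed.

Lemma rsum_le f g : (forall t, f t <= g t) -> rsum f <= rsum g.
Proof.
move=> H; rewrite /rsum; elim/big_rec2: _ => [|i y1 y2 _ Hy]; first lra.
by have := H i; lra.
Qed.

Lemma rsum_nonneg f : (forall t, 0 <= f t) -> 0 <= rsum f.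
Proof. by move=> H; rewrite -rsum_const0; apply: rsum_le. Qed.

Lemma rsum_term_le f i : (forall t, 0 <= f t) -> f i <= rsum f.
Proof.
move=> H; rewrite /rsum (bigD1 i) //=.
have : 0 <= \big[Rplus/0]_(j | j != i) f j.
  by elim/big_rec: _ => [|j y _ Hy]; [lra | have := H j; lra].
lra.
Qed.

Lemma rsum_if (b : bool) f :
  rsum (fun t => if b then f t else 0) = if b then rsum f else 0.
Proof. by case: b => //; rewrite rsum_const0. Qed.
End FiniteSums.

Lemma rsum_lin4 (T : finType) (a b c d : T -> R) :
  rsum (fun t => a t + b t - c t - d t) = rsum a + rsum b - rsum c - rsum d.
Proof. by rewrite /Rminus !rsum_add !rsum_opp. Qed.

Lemma rsum_exchange (A B : finType) (F : A -> B -> R) :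
  rsum (fun a => rsum (fun b => F a b)) = rsum (fun b => rsum (fun a => F a b)).
Proof. by rewrite /rsum exchange_big. Qed.

Lemma rsum_pair (A B : finType) (F : A * B -> R) :
  rsum F = rsum (fun a => rsum (fun b => F (a, b))).
Proof. by rewrite /rsum pair_bigA; apply: eq_bigr => -[a b]. Qed.

Lemma rsum_fibres (A B : finType) (pi : A -> B) (F : A -> R) :
  rsum F = rsum (fun b => rsum (fun a => if pi a == b then F a else 0)).
Proof.
rewrite rsum_exchange; apply: rsum_ext => a.
by rewrite /rsum -big_mkcond /= (big_pred1 (pi a)) // => b; rewrite eq_sym.
Qed.

Section Marginals.
Variables TX TY TZ : finType.
Implicit Type Q : TX * TY * TZ -> R.

Lemma rsum3 Q :
  rsum Q = rsum (fun x => rsum (fun y => rsum (fun z => Q (x, y, z)))).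
Proof.
rewrite rsum_pair rsum_pair; apply: rsum_ext => x; apply: rsum_ext => y.
exact: rsum_ext.
Qed.

Lemma rsum_margXY Q : rsum Q = rsum (fun x => rsum (fun y => margXY Q x y)).
Proof. exact: rsum3. Qed.

Lemma margZ_YZ Q z : margZ Q z = rsum (fun y => margYZ Q y z).
Proof. by rewrite /margZ rsum_pair rsum_exchange; apply: rsum_ext => y. Qed.

Lemma rsum_margZ Q : rsum Q = rsum (fun z => margZ Q z).
Proof.
rewrite rsum3 rsum_exchange.
rewrite (@rsum_ext _ _ (fun y => rsum (fun z => rsum (fun x => Q (x, y, z)))));
  last by move=> y; rewrite rsum_exchange.
by rewrite rsum_exchange; apply: rsum_ext => z; rewrite margZ_YZ.
Qed.

Section Nonneg.
Variable Q : TX * TY * TZ -> R.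
Hypothesis Q_ge0 : forall t, 0 <= Q t.

Lemma le_margXZ x y z : Q (x, y, z) <= margXZ Q x z.
Proof. exact: (@rsum_term_le _ (fun y => Q (x, y, z)) y (fun _ => Q_ge0 _)). Qed.

Lemma le_margYZ x y z : Q (x, y, z) <= margYZ Q y z.
Proof. exact: (@rsum_term_le _ (fun x => Q (x, y, z)) x (fun _ => Q_ge0 _)). Qed.

Lemma le_margZ x y z : Q (x, y, z) <= margZ Q z.
Proof.
exact: (@rsum_term_le _ (fun xy : TX * TY => Q (xy.1, xy.2, z)) (x, y) (fun _ => Q_ge0 _)).
Qed.

Lemma margXZ_nonneg x z : 0 <= margXZ Q x z.
Proof. by apply: rsum_nonneg => ?; apply: Q_ge0. Qed.

Lemma margYZ_nonneg y z : 0 <= margYZ Q y z.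
Proof. by apply: rsum_nonneg => ?; apply: Q_ge0. Qed.

Lemma margZ_nonneg z : 0 <= margZ Q z.
Proof. by apply: rsum_nonneg => ?; apply: Q_ge0. Qed.
End Nonneg.
End Marginals.

(* The summand of CMI at a point with mass q, where m, a, b are the Z-, (X,Z)-
   and (Y,Z)-marginals there. *)
Definition cmi_term (q m a b : R) : R :=
  if Req_EM_T q 0 then 0 else q * ln (q * m / (a * b)).

Lemma CMI_sum3 (TX TY TZ : finType) (Q : TX * TY * TZ -> R) :
  CMI Q = rsum (fun x => rsum (fun y => rsum (fun z =>
            cmi_term (Q (x, y, z)) (margZ Q z) (margXZ Q x z) (margYZ Q y z)))).
Proof. exact: rsum3. Qed.

Lemma xln_mult_le q A c : 0 < q -> 0 < A -> 0 < c ->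
  q * ln (A * c) <= q * ln A - (q - q * c).
Proof.
move=> Hq HA Hc; rewrite ln_mult //.
have := Rmult_le_compat_l q _ _ (Rlt_le _ _ Hq) (ln_le_sub1 Hc); lra.
Qed.

Section CoarseGraining.
Variables (TX TY TZ TW : finType) (pi : TZ -> TW).
Variable P : TX * TY * TZ -> R.
Hypothesis hP : is_dist P.

Definition coarsen (t : TX * TY * TW) : R :=
  rsum (fun z => if pi z == t.2 then P (t.1.1, t.1.2, z) else 0).

Lemma margXY_coarsen x y : margXY coarsen x y = margXY P x y.
Proof. by rewrite /margXY /coarsen /= [in RHS](rsum_fibres pi). Qed.

Lemma margXZ_coarsen x w :
  margXZ coarsen x w = rsum (fun z => if pi z == w then margXZ P x z else 0).
Proof.
rewrite /margXZ /coarsen /= rsum_exchange; apply: rsum_ext => z.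
by rewrite rsum_if.
Qed.

Lemma coarsen_nonneg t : 0 <= coarsen t.
Proof. by apply: rsum_nonneg => z; case: (_ == _); [apply: hP.1 | lra]. Qed.

Lemma coarsen_dist : is_dist coarsen.
Proof.
split; first exact: coarsen_nonneg.
rewrite rsum_margXY (@rsum_ext _ _ (fun x => rsum (fun y => margXY P x y))).
  by rewrite -rsum_margXY; apply: hP.2.
by move=> x; apply: rsum_ext => y; rewrite margXY_coarsen.
Qed.

Lemma margXZ_le_coarsen x z : margXZ P x z <= margXZ coarsen x (pi z).
Proof.
rewrite margXZ_coarsen.
have := @rsum_term_le _ (fun z0 => if pi z0 == pi z then margXZ P x z0 else 0) z.
rewrite eqxx; apply=> z0; case: (_ == _); last lra.
exact: margXZ_nonneg hP.1 _ _.
Qed.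

(* Lifting: given Q in Delta for the coarse law, spread the mass Q(x,y,w) over
   the fibre of w in proportion to P(z | x, pi z = w).  The result lies in Delta_P
   and makes Y independent of Z given (X, pi Z). *)
Variable Q : TX * TY * TW -> R.
Hypothesis hQ : DeltaP coarsen Q.

Definition fibre_weight x z : R := margXZ P x z * / margXZ coarsen x (pi z).

Definition lift (t : TX * TY * TZ) : R :=
  Q (t.1.1, t.1.2, pi t.2) * fibre_weight t.1.1 t.2.

Lemma Q_nonneg t : 0 <= Q t. Proof. exact: hQ.1.1. Qed.

Lemma fibre_weight_nonneg x z : 0 <= fibre_weight x z.
Proof.
apply: Rdiv_nonneg; [exact: margXZ_nonneg hP.1 _ _ | exact: margXZ_nonneg coarsen_nonneg _ _].
Qed.

Lemma lift_nonneg t : 0 <= lift t.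
Proof. apply: Rmult_le_pos; [exact: Q_nonneg | exact: fibre_weight_nonneg]. Qed.

Lemma Q_eq0 x y w : margXZ coarsen x w = 0 -> Q (x, y, w) = 0.
Proof.
move=> H0; have := le_margXZ Q_nonneg x y w; rewrite hQ.2.2 H0.
have := Q_nonneg (x, y, w); lra.
Qed.

Lemma fibre_weight_sum x w phi : (margXZ coarsen x w = 0 -> phi = 0) ->
  phi * rsum (fun z => if pi z == w then fibre_weight x z else 0) = phi.
Proof.
move=> Hphi; case: (Req_EM_T (margXZ coarsen x w) 0) => Ha.
  by rewrite (Hphi Ha) Rmult_0_l.
rewrite (@rsum_ext _ _
  (fun z => (if pi z == w then margXZ P x z else 0) * / margXZ coarsen x w)).
  by rewrite -rsum_scalr -margXZ_coarsen Rinv_r // Rmult_1_r.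
by move=> z; rewrite /fibre_weight; case: eqP => [->|_]; [|rewrite Rmult_0_l].
Qed.

Lemma margXZ_lift_eq x z : margXZ lift x z = margXZ Q x (pi z) * fibre_weight x z.
Proof. by rewrite /margXZ rsum_scalr. Qed.

Lemma margXZ_lift x z : margXZ lift x z = margXZ P x z.
Proof.
rewrite margXZ_lift_eq hQ.2.2 /fibre_weight.
case: (Req_EM_T (margXZ coarsen x (pi z)) 0) => Ha; last by field.
have := margXZ_le_coarsen x z; have := margXZ_nonneg hP.1 x z.
rewrite Ha => ? ?; have -> : margXZ P x z = 0 by lra.
lra.
Qed.

Lemma margXY_lift x y : margXY lift x y = margXY P x y.
Proof.
rewrite -margXY_coarsen -hQ.2.1 /margXY /lift /= (rsum_fibres pi).
apply: rsum_ext => w.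
rewrite (@rsum_ext _ _ (fun z => Q (x, y, w) * (if pi z == w then fibre_weight x z else 0))).
  by rewrite -rsum_scal fibre_weight_sum //; apply: Q_eq0.
by move=> z; case: eqP => [->|_]; lra.
Qed.

Lemma lift_DeltaP : DeltaP P lift.
Proof.
split; [split|split].
- exact: lift_nonneg.
- rewrite rsum_margXY (@rsum_ext _ _ (fun x => rsum (fun y => margXY P x y))).
    by rewrite -rsum_margXY; apply: hP.2.
  by move=> x; apply: rsum_ext => y; rewrite margXY_lift.
- exact: margXY_lift.
- exact: margXZ_lift.
Qed.

Definition coarse_term x y w : R :=
  cmi_term (Q (x, y, w)) (margZ Q w) (margXZ Q x w) (margYZ Q y w).

Lemma CMI_coarse_as_fine_sum : CMI Q = rsum (fun t : TX * TY * TZ =>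
  if Req_EM_T (lift t) 0 then 0
  else lift t * ln (Q (t.1.1, t.1.2, pi t.2) * margZ Q (pi t.2)
                    / (margXZ Q t.1.1 (pi t.2) * margYZ Q t.1.2 (pi t.2)))).
Proof.
rewrite CMI_sum3 [RHS]rsum3; apply: rsum_ext => x; apply: rsum_ext => y /=.
rewrite (@rsum_ext _ _ (fun w => coarse_term x y w *
    rsum (fun z => if pi z == w then fibre_weight x z else 0))); last first.
  move=> w; rewrite fibre_weight_sum // => Ha.
  by rewrite /coarse_term /cmi_term (Q_eq0 y Ha); case: Req_EM_T.
rewrite [RHS](rsum_fibres pi); apply: rsum_ext => w.
rewrite rsum_scal; apply: rsum_ext => z.
case: eqP => [<-|_]; last by rewrite Rmult_0_r.
rewrite /coarse_term /cmi_term /lift /=.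
case: (Req_EM_T (Q (x, y, pi z)) 0) => [E1|E1];
  case: (Req_EM_T (Q (x, y, pi z) * fibre_weight x z) 0) => [E2|E2] /=.
- by rewrite Rmult_0_l.
- by exfalso; apply: E2; rewrite E1 Rmult_0_l.
- by rewrite Rmult_assoc (Rmult_comm (ln _)) -Rmult_assoc E2 Rmult_0_l.
- by ring.
Qed.

(* The ratio between the coarse and fine log-arguments:
   Q(y, pi z) lift(z) / (Q(pi z) lift(y, z)). *)
Definition correction y z : R :=
  margYZ Q y (pi z) * margZ lift z / margZ Q (pi z) / margYZ lift y z.

(* Pointwise: the fine summand is the coarse log-term shifted by ln(correction),
   and ln c <= c - 1. *)
Lemma cmi_term_lift_le x y z :
  cmi_term (lift (x, y, z)) (margZ lift z) (margXZ lift x z) (margYZ lift y z)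
  <= (if Req_EM_T (lift (x, y, z)) 0 then 0
      else lift (x, y, z) * ln (Q (x, y, pi z) * margZ Q (pi z)
                                / (margXZ Q x (pi z) * margYZ Q y (pi z))))
     - (lift (x, y, z) - lift (x, y, z) * correction y z).
Proof.
rewrite /cmi_term; destruct (Req_EM_T (lift (x, y, z)) 0) as [E|E]; cbn [is_left].
  by rewrite E; lra.
have Hq' : 0 < lift (x, y, z) by have := lift_nonneg (x, y, z); lra.
have [Hq Hr] : 0 < Q (x, y, pi z) /\ 0 < fibre_weight x z.
  have := Q_nonneg (x, y, pi z); have := fibre_weight_nonneg x z.
  by move: Hq'; rewrite /lift /=; nra.
have Ha := le_margXZ Q_nonneg x y (pi z).
have Hb := le_margYZ Q_nonneg x y (pi z).
have Hm := le_margZ Q_nonneg x y (pi z).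
have Hb' := le_margYZ lift_nonneg x y z.
have Hm' := le_margZ lift_nonneg x y z.
rewrite margXZ_lift_eq.
rewrite (_ : _ * margZ lift z / _ =
  Q (x, y, pi z) * margZ Q (pi z) / (margXZ Q x (pi z) * margYZ Q y (pi z))
  * correction y z); last first.
  have -> : lift (x, y, z) = Q (x, y, pi z) * fibre_weight x z by [].
  by rewrite /correction; field; repeat split; lra.
apply: xln_mult_le => //.
- by apply: Rdiv_lt_0_compat; [apply: Rmult_lt_0_compat | apply: Rmult_lt_0_compat]; lra.
- by rewrite /correction; repeat apply: Rdiv_lt_0_compat; try apply: Rmult_lt_0_compat; lra.
Qed.

Lemma correction_mean_le1 :
  rsum (fun t : TX * TY * TZ => lift t * correction t.1.2 t.2) <= 1.
Proof.
have HmQ z := margZ_nonneg Q_nonneg (pi z).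
have Hratio z : 0 <= margZ lift z / margZ Q (pi z).
  exact: Rdiv_nonneg (margZ_nonneg lift_nonneg z) (HmQ z).
rewrite rsum3 rsum_exchange.
rewrite (@rsum_ext _ _ (fun y => rsum (fun z => margYZ lift y z * correction y z)));
  last first.
  by move=> y; rewrite rsum_exchange; apply: rsum_ext => z; rewrite /margYZ rsum_scalr.
apply: (@Rle_trans _ (rsum (fun y => rsum (fun z =>
    margYZ Q y (pi z) * (margZ lift z / margZ Q (pi z)))))).
  apply: rsum_le => y; apply: rsum_le => z; rewrite /correction.
  rewrite (_ : margYZ Q y (pi z) * margZ lift z / margZ Q (pi z) =
               margYZ Q y (pi z) * (margZ lift z / margZ Q (pi z))); last first.
    by rewrite /Rdiv Rmult_assoc.
  apply: Rmult_div_le; first exact: margYZ_nonneg lift_nonneg y z.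
  by apply: Rmult_le_pos => //; apply: margYZ_nonneg Q_nonneg y (pi z).
rewrite rsum_exchange.
apply: (@Rle_trans _ (rsum (fun z => margZ lift z))).
  apply: rsum_le => z; rewrite -rsum_scalr -margZ_YZ.
  exact: Rmult_div_le (HmQ z) (margZ_nonneg lift_nonneg z).
by rewrite -rsum_margZ lift_DeltaP.1.2; lra.
Qed.

Lemma CMI_lift_le : CMI lift <= CMI Q.
Proof.
rewrite CMI_coarse_as_fine_sum.
set L := fun t : TX * TY * TZ => if Req_EM_T (lift t) 0 then 0 else _.
apply: (@Rle_trans _ (rsum (fun t => L t - (lift t - lift t * correction t.1.2 t.2)))).
  rewrite CMI_sum3 [X in _ <= X]rsum3.
  by apply: rsum_le => x; apply: rsum_le => y; apply: rsum_le => z;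
    apply: cmi_term_lift_le.
rewrite (@rsum_ext _ _ (fun t => L t + (- lift t + lift t * correction t.1.2 t.2)));
  last by move=> t; ring.
rewrite rsum_add rsum_add rsum_opp lift_DeltaP.1.2.
apply: Rle_trans (Rplus_le_compat_l _ _ _ (Rplus_le_compat_l _ _ _ correction_mean_le1)) _.
lra.
Qed.
End CoarseGraining.

Lemma cmi_term_xlnx q m a b : 0 <= q -> q <= m -> q <= a -> q <= b ->
  cmi_term q m a b = xlnx q + q * ln m - q * ln a - q * ln b.
Proof.
move=> Hq Hm Ha Hb; rewrite /cmi_term /xlnx.
destruct (Req_EM_T q 0) as [->|E]; cbn [is_left]; first ring.
have Hqm : 0 < q * m by apply: Rmult_lt_0_compat; lra.
have Hab : 0 < a * b by apply: Rmult_lt_0_compat; lra.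
rewrite /Rdiv (ln_mult _ _ Hqm (Rinv_0_lt_compat _ Hab)) (ln_Rinv _ Hab).
have -> : ln (q * m) = ln q + ln m by apply: ln_mult; lra.
have -> : ln (a * b) = ln a + ln b by apply: ln_mult; lra.
ring.
Qed.

Section CMIContinuous.
Variables TX TY TZ : finType.
Implicit Type Q : TX * TY * TZ -> R.

(* CMI through x ln x of the joint law and of its marginals; this form is
   continuous in Q. *)
Definition CMI_xlnx Q : R :=
  rsum (fun x => rsum (fun y => rsum (fun z => xlnx (Q (x, y, z)))))
  + rsum (fun z => xlnx (margZ Q z))
  - rsum (fun x => rsum (fun z => xlnx (margXZ Q x z)))
  - rsum (fun y => rsum (fun z => xlnx (margYZ Q y z))).

Lemma CMI_eq_xlnx Q : (forall t, 0 <= Q t) -> CMI Q = CMI_xlnx Q.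
Proof.
move=> Q_ge0; rewrite CMI_sum3.
rewrite (@rsum_ext _ _ (fun x =>
   rsum (fun y => rsum (fun z => xlnx (Q (x, y, z))))
 + rsum (fun y => rsum (fun z => Q (x, y, z) * ln (margZ Q z)))
 - rsum (fun y => rsum (fun z => Q (x, y, z) * ln (margXZ Q x z)))
 - rsum (fun y => rsum (fun z => Q (x, y, z) * ln (margYZ Q y z))))); last first.
  move=> x; rewrite -rsum_lin4; apply: rsum_ext => y; rewrite -rsum_lin4.
  apply: rsum_ext => z; apply: cmi_term_xlnx; first exact: Q_ge0.
  + exact: le_margZ.
  + exact: le_margXZ.
  + exact: le_margYZ.
rewrite rsum_lin4 /CMI_xlnx.
have HZ : rsum (fun x => rsum (fun y => rsum (fun z => Q (x, y, z) * ln (margZ Q z))))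
          = rsum (fun z => xlnx (margZ Q z)).
  rewrite (@rsum_ext _ _ (fun x => rsum (fun z => rsum (fun y =>
      Q (x, y, z) * ln (margZ Q z))))); last by move=> x; apply: rsum_exchange.
  rewrite rsum_exchange; apply: rsum_ext => z.
  have -> : margZ Q z = rsum (fun x => rsum (fun y => Q (x, y, z))).
    by rewrite /margZ rsum_pair.
  by rewrite /xlnx rsum_scalr; apply: rsum_ext => x; rewrite rsum_scalr.
have HXZ : rsum (fun x => rsum (fun y => rsum (fun z => Q (x, y, z) * ln (margXZ Q x z))))
           = rsum (fun x => rsum (fun z => xlnx (margXZ Q x z))).
  apply: rsum_ext => x; rewrite rsum_exchange; apply: rsum_ext => z.
  by rewrite /xlnx {3}/margXZ rsum_scalr.
have HYZ : rsum (fun x => rsum (fun y => rsum (fun z => Q (x, y, z) * ln (margYZ Q y z))))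
           = rsum (fun y => rsum (fun z => xlnx (margYZ Q y z))).
  rewrite rsum_exchange; apply: rsum_ext => y; rewrite rsum_exchange.
  by apply: rsum_ext => z; rewrite /xlnx {3}/margYZ rsum_scalr.
by rewrite HZ HXZ HYZ.
Qed.
End CMIContinuous.

Lemma continuous_Rplus (S : topologicalType) (f g : S -> R) :
  continuous f -> continuous g -> continuous (fun s => f s + g s).
Proof. by move=> cf cg s; apply: (@continuousD R R^o S f g s (cf s) (cg s)). Qed.

Lemma continuous_Ropp (S : topologicalType) (f : S -> R) :
  continuous f -> continuous (fun s => - f s).
Proof. by move=> cf s; apply: (@continuousN R R^o S f s (cf s)). Qed.

Lemma continuous_xlnx_comp (S : topologicalType) (f : S -> R) :
  continuous f -> continuous (fun s => xlnx (f s)).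
Proof. by move=> cf s; exact: (continuous_comp (cf s) (@xlnx_continuous (f s))). Qed.

Lemma continuous_rsum (S : topologicalType) (I : finType) (F : I -> S -> R) :
  (forall i, continuous (F i)) -> continuous (fun s => rsum (fun i => F i s)).
Proof.
move=> cF; rewrite /rsum; elim: (index_enum I) => [|a l IH].
  under [X in continuous X]funext => s do rewrite big_nil.
  exact: cst_continuous.
under [X in continuous X]funext => s do rewrite big_cons.
exact: continuous_Rplus.
Qed.

Lemma continuous_eval (T : finType) (t : T) :
  continuous (fun Q : {ptws T -> R} => Q t).
Proof. exact: (@proj_continuous T (fun _ => R) t). Qed.

Lemma CMI_xlnx_continuous (TX TY TZ : finType) :
  continuous (fun Q : {ptws TX * TY * TZ -> R} => CMI_xlnx Q).
Proof.
rewrite /CMI_xlnx /Rminus.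
apply: continuous_Rplus; [apply: continuous_Rplus; [apply: continuous_Rplus|]|];
  try apply: continuous_Ropp;
  repeat (apply: continuous_rsum => ?); apply: continuous_xlnx_comp;
  rewrite ?/margZ ?/margXZ ?/margYZ;
  repeat (apply: continuous_rsum => ?); exact: continuous_eval.
Qed.

Local Open Scope classical_set_scope.

Lemma closed_forall (S : topologicalType) (I : Type) (A : I -> S -> Prop) :
  (forall i, closed [set s | A i s]) -> closed [set s | forall i, A i s].
Proof.
move=> H.
have -> : [set s | forall i, A i s] = \bigcap_(i in [set: I]) [set s | A i s].
  by apply/seteqP; split => s /= Hs => [i _|i]; apply: Hs.
by apply: closed_bigI => i _; apply: H.
Qed.

Lemma closed_level (S : topologicalType) (f : S -> R) (c : R) :
  continuous f -> closed [set s | f s = c].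
Proof.
move=> cf; have -> : [set s | f s = c] = f @^-1` [set y | y = c] by [].
by apply: preimage_closed; [move=> s _; apply: cf | apply: closed_eq].
Qed.

Lemma closed_nonneg (S : topologicalType) (f : S -> R) :
  continuous f -> closed [set s | 0 <= f s].
Proof.
move=> cf; have -> : [set s | 0 <= f s] = f @^-1` [set y | (0 <= y)%O].
  by apply/seteqP; split => s /= Hs; apply/RleP.
by apply: preimage_closed; [move=> s _; apply: cf | apply: closed_ge].
Qed.

Section Minimizer.
Variables TX TY TZ : finType.
Variable P : TX * TY * TZ -> R.
Hypothesis hP : is_dist P.

Definition DeltaP_set : set {ptws TX * TY * TZ -> R} := [set Q | DeltaP P Q].

(* Delta_P is cut out by finitely many closed (in)equalities... *)
Lemma DeltaP_closed : closed DeltaP_set.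
Proof.
change (closed (([set Q : {ptws TX * TY * TZ -> R} | forall t, 0 <= Q t]
  `&` [set Q | rsum Q = 1])
  `&` ([set Q | forall x y, margXY Q x y = margXY P x y]
  `&` [set Q | forall x z, margXZ Q x z = margXZ P x z]))).
apply: closedI; apply: closedI.
- by apply: closed_forall => t; apply: closed_nonneg; apply: continuous_eval.
- by apply: closed_level; apply: continuous_rsum => t; apply: continuous_eval.
- apply: closed_forall => x; apply: closed_forall => y; apply: closed_level.
  by apply: continuous_rsum => z; apply: continuous_eval.
- apply: closed_forall => x; apply: closed_forall => z; apply: closed_level.
  by apply: continuous_rsum => y; apply: continuous_eval.
Qed.

(* ...and lies in the cube [0,1]^(X*Y*Z), compact by Tychonoff. *)
Lemma DeltaP_compact : compact.compact DeltaP_set.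
Proof.
pose cube : set {ptws TX * TY * TZ -> R} :=
  [set Q | forall t, (`[0%R, 1%R] : set R) (Q t)].
have cube_compact : compact.compact cube.
  exact: (@tychonoff (TX * TY * TZ)%type (fun _ => R) (fun _ => `[0%R, 1%R])
                     (fun _ => @segment_compact R 0%R 1%R)).
have -> : DeltaP_set = cube `&` DeltaP_set.
  apply/seteqP; split => Q //= HQ; last by case: HQ.
  split=> // t; have [[Hn H1] _] := HQ; have := rsum_term_le t Hn.
  move=> Hle /=; rewrite in_itv /=; apply/andP; split; apply/RleP; [exact: Hn | lra].
exact: compact_closedI cube_compact DeltaP_closed.
Qed.

(* Weierstrass: the continuous CMI attains its minimum on Delta_P. *)
Lemma UI_is_min : is_min_UI P (UI P).
Proof.
rewrite /UI; apply: epsilon_spec.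
have DeltaP_P : DeltaP_set !=set0 by exists P; split => //; split.
have [Q DQ Qmin] := compact_EVT_min DeltaP_P DeltaP_compact
  (continuous_subspaceT (@CMI_xlnx_continuous TX TY TZ)).
rewrite in_setE in DQ; exists (CMI Q); split; first by exists Q.
move=> Q' DQ'; rewrite (CMI_eq_xlnx DQ.1.1) (CMI_eq_xlnx DQ'.1.1).
by apply/RleP; apply: Qmin; rewrite in_setE.
Qed.
End Minimizer.

Theorem mainTheorem15 (TX TY : finType) (TZ : nat -> finType) (k : nat)
  (hk : (1 <= k)%nat)
  (P : TX * TY * Ztuple TZ k.+1 -> R) (hP : is_dist P) :
  (UI (marg_init P) >= UI P)%coqR.
Proof.
(* marg_init P is the coarse-graining of P along Zinit; a minimiser of the coarse
   problem lifts to a point of Delta_P with no larger CMI. *)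
have hPm : is_dist (marg_init P) := coarsen_dist (@Zinit TZ k) hP.
have [[Qm [DQm <-]] _] := UI_is_min hPm.
have [_ UI_le] := UI_is_min hP.
have := UI_le _ (lift_DeltaP (pi := @Zinit TZ k) hP DQm).
have := CMI_lift_le (pi := @Zinit TZ k) hP DQm.
lra.
Qed.
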